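(* Let $\langle \mathscr{A} \mid \mathscr{R} \rangle$ be a strongly $C(4)$ presentation. Then the monoid presented is left cancellative if and only if $\mathscr{R}$ contains no relation of the form $(ar, as)$ where $a \in \mathscr{A}$ and $r, s \in \mathscr{A}^*$.
   Context: A monoid presentation $\langle \mathscr{A} \mid \mathscr{R} \rangle$ consists of an alphabet $\mathscr{A}$ and a set $\mathscr{R} \subseteq \mathscr{A}^* \times \mathscr{A}^*$ of relations; the monoid presented is $\mathscr{A}^*$ modulo the smallest congruence containing $\mathscr{R}$. A relation word is a word occurring as one side of a relation. A piece is a word which occurs as a factor of two distinct relation words, or in two different (possibly overlapping) positions within one relation word; the empty word is always a piece. The presentation is $C(n)$ if no relation word can be written as a product of strictly fewer than $n$ pieces, and strongly $C(n)$ if it is $C(n)$ and additionally has no repeated relation words (no word occurs more than once as a side of a relation). *)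

From mathcomp Require Import all_boot.
Set Implicit Arguments. Unset Strict Implicit. Unset Printing Implicit Defensive.

(* A presentation <A | R>: words are [seq A]; R is an arbitrary (possibly
   infinite) set of relations, i.e. a predicate on pairs of words. *)
Definition word (A : Type) := seq A.
Definition relset (A : Type) := word A * word A -> Prop.

Definition relation_word (A : Type) (R : relset A) (w : word A) : Prop :=
  exists v, R (w, v) \/ R (v, w).

Definition piece (A : Type) (R : relset A) (p : word A) : Prop :=
  p = [::] \/
  exists u v x1 y1 x2 y2 : word A,
    [/\ relation_word R u, relation_word R v,
        u = x1 ++ p ++ y1, v = x2 ++ p ++ y2 & (u <> v \/ x1 <> x2)].

Definition C_cond (A : Type) (R : relset A) (n : nat) : Prop :=
  forall (w : word A) (ps : seq (word A)),
    relation_word R w -> (forall i, i < size ps -> piece R (nth [::] ps i)) ->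
    size ps < n -> flatten ps <> w.

Definition no_repeated_relation_words (A : Type) (R : relset A) : Prop :=
  forall u v u' v' : word A, R (u, v) -> R (u', v') ->
    [/\ u <> v', u = u' -> v = v' & v = v' -> u = u'].

Definition strongly_C (A : Type) (R : relset A) (n : nat) : Prop :=
  C_cond R n /\ no_repeated_relation_words R.

Inductive pres_cong (A : Type) (R : relset A) : word A -> word A -> Prop :=
  | pc_step : forall x y l r, R (l, r) -> pres_cong R (x ++ l ++ y) (x ++ r ++ y)
  | pc_refl : forall u, pres_cong R u u
  | pc_sym : forall u v, pres_cong R u v -> pres_cong R v u
  | pc_trans : forall u v w, pres_cong R u v -> pres_cong R v w -> pres_cong R u w.

Definition left_cancellative (A : Type) (R : relset A) : Prop :=
  forall a b c : word A, pres_cong R (a ++ b) (a ++ c) -> pres_cong R b c.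

From mathcomp Require Import all_boot.
From mathcomp Require Import zify.
From Stdlib Require Import Classical.
Set Implicit Arguments. Unset Strict Implicit. Unset Printing Implicit Defensive.

(* If [(a r, a s)] is a relation then [r ~ s], but by C(2) no relation word is
   a factor of [r], so [r = s] and [a r] is a repeated relation word.
   Conversely, cancellation of one letter from a derivation [x u ~> x v] of
   length [n] is proved by strong induction on [n], together with the claim
   that the letter [b] following a nonempty piece prefix of a relation word
   [p b w] is never rewritten. If the derivation rewrites [x] by a relation
   [(x l, r0 r)], then [r0 <> x], so [r0] is rewritten later by some relation
   word [l']. By C(4), [l'] is neither a proper prefix nor a proper extension
   of [r0 r]; if they diverge, their common prefix is a piece and the claim
   is contradicted; so [l' = r0 r], and since relation words have unique
   partners this later step undoes the first one. The claim is proved in the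
   same way, with C(4) now excluding that [b w] and [l'] are comparable. *)

Section Derivations.
Variables (A : Type) (R : relset A).

Definition related (l r : word A) := R (l, r) \/ R (r, l).

Definition elementary_step (u v : word A) :=
  exists c l r d, [/\ related l r, u = c ++ l ++ d & v = c ++ r ++ d].

Inductive derivation : nat -> word A -> word A -> Prop :=
| derivation0 u : derivation 0 u u
| derivationS n u v w :
    elementary_step u v -> derivation n v w -> derivation n.+1 u w.

Lemma related_sym l r : related l r -> related r l.
Proof. by case; [right|left]. Qed.

Lemma related_relation_word l r :
  related l r -> relation_word R l /\ relation_word R r.
Proof.
by case=> H; split; [exists r; left | exists l; right | exists r; right | exists l; left].
Qed.

Lemma elementary_step_sym u v : elementary_step u v -> elementary_step v u.
Proof.
by move=> [c [l [r [d [/related_sym H -> ->]]]]]; exists c, r, l, d.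
Qed.

Lemma derivation1 u v : elementary_step u v -> derivation 1 u v.
Proof. by move=> H; apply: derivationS H (derivation0 _). Qed.

Lemma derivation_trans m n u v w :
  derivation m u v -> derivation n v w -> derivation (m + n) u w.
Proof.
elim=> [//|k u' v' w' H _ IH] Hn; rewrite addSn; exact: derivationS H (IH Hn).
Qed.

Lemma derivation_sym n u v : derivation n u v -> derivation n v u.
Proof.
elim=> [u'|k u' v' w' H _ IH]; first exact: derivation0.
rewrite -addn1; apply: derivation_trans IH _.
exact/derivation1/elementary_step_sym.
Qed.

Lemma derivation_catl n p u v :
  derivation n u v -> derivation n (p ++ u) (p ++ v).
Proof.
elim=> [u'|k u' v' w' [c [l [r [d [H -> ->]]]]] _ IH]; first exact: derivation0.
by apply: derivationS IH; exists (p ++ c), l, r, d; rewrite !catA.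
Qed.

Lemma derivation0_eq u v : derivation 0 u v -> u = v.
Proof. by move=> H; inversion H. Qed.

Lemma derivationS_inv n u w :
  derivation n.+1 u w -> exists2 v, elementary_step u v & derivation n v w.
Proof. by move=> H; inversion H; subst; exists v. Qed.

Lemma pres_cong_derivation u v : pres_cong R u v -> exists n, derivation n u v.
Proof.
elim=> [x y l r H|u'|u' v' _ [n Hn]|u' v' w' _ [m Hm] _ [n Hn]].
- by exists 1; apply: derivation1; exists x, l, r, y; split=> //; left.
- by exists 0; exact: derivation0.
- by exists n; exact: derivation_sym.
- by exists (m + n); exact: derivation_trans Hn.
Qed.

Lemma derivation_pres_cong n u v : derivation n u v -> pres_cong R u v.
Proof.
elim=> [u'|k u' v' w' [c [l [r [d [H -> ->]]]]] _ IH]; first exact: pc_refl.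
apply: pc_trans IH; case: H => H; first exact: pc_step.
exact/pc_sym/pc_step.
Qed.

Lemma derivation_head_change n y z u s : y <> z ->
  derivation n (y :: u) (z :: s) ->
  exists k u' l r d, [/\ k < n, derivation k u u', related l r,
                        y :: u' = l ++ d & derivation (n - k.+1) (r ++ d) (z :: s)].
Proof.
move=> neq_yz H; move Eyu: (y :: u) => yu in H; move Ezs: (z :: s) => zs in H.
elim: H u Eyu Ezs => [v|k v v' w St Sts IH] u Eyu Ezs.
  by move: Ezs; rewrite -Eyu => -[/esym/neq_yz].
case: St => [[|c0 c] [l [r [d [Hlr /= Ev Ev']]]]].
  exists 0, u, l, r, d; split=> //; first exact: derivation0.
  - by rewrite Eyu Ev.
  - by rewrite subn1 -Ev' Ezs.
rewrite -Eyu in Ev; case: Ev => Ey Eu.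
have [k' [u' [l' [r' [d' [lt_k' Dk' Hlr' Eyu' Drest]]]]]] :=
  IH (c ++ r ++ d) ltac:(by rewrite Ev' Ey) Ezs.
exists k'.+1, u', l', r', d'; split=> //.
by apply: derivationS Dk'; exists c, l, r, d.
Qed.

Lemma derivation_factor_free n u v :
  (forall c l d, relation_word R l -> u <> c ++ l ++ d) -> derivation n u v -> u = v.
Proof.
move=> free D; case: D free => [//|k u' v' w' [c [l [r [d [Hlr Eu _]]]]] _] free.
by case: (free c l d (related_relation_word Hlr).1 Eu).
Qed.

End Derivations.

Lemma cat_cons_head_inj (A : Type) (c u v : seq A) a b :
  c ++ a :: u = c ++ b :: v -> a = b.
Proof. by elim: c => [[]|c0 c IH [] /IH]. Qed.

Lemma prefix_cases (A : Type) (u v : seq A) :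
  [\/ exists e, v = u ++ e, exists e, u = v ++ e |
      exists c a b u' v', [/\ a <> b, u = c ++ a :: u' & v = c ++ b :: v']].
Proof.
elim: u v => [|a u IH] [|b v].
- by apply: Or31; exists [::].
- by apply: Or31; exists (b :: v).
- by apply: Or32; exists (a :: u).
case: (classic (a = b)) => [<-|neq_ab]; last by apply: Or33; exists [::], a, b, u, v.
case: (IH v) => [[e ->]|[e ->]|[c [x [y [u' [v' [neq_xy -> ->]]]]]]].
- by apply: Or31; exists e.
- by apply: Or32; exists e.
- by apply: Or33; exists (a :: c), x, y, u', v'.
Qed.

Section SmallCancellation.
Variables (A : Type) (R : relset A).
Hypothesis C4 : C_cond R 4.

Lemma pieceI p u v x1 y1 x2 y2 :
  relation_word R u -> relation_word R v -> u = x1 ++ p ++ y1 -> v = x2 ++ p ++ y2 ->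
  u <> v \/ x1 <> x2 -> piece R p.
Proof. by move=> *; right; exists u, v, x1, y1, x2, y2. Qed.

Lemma relation_word_neq_nil w : relation_word R w -> w <> [::].
Proof. by move=> Hw Ew; apply: (C4 (ps := [::]) Hw); rewrite ?Ew. Qed.

Lemma relation_word_not_piece w : relation_word R w -> ~ piece R w.
Proof.
by move=> Hw Pw; apply: (C4 (ps := [:: w]) Hw); rewrite /= ?cats0 //; case.
Qed.

Lemma relation_word_not_two_pieces w p q :
  relation_word R w -> piece R p -> piece R q -> w <> p ++ q.
Proof.
move=> Hw Pp Pq Ew; apply: (C4 (ps := [:: p; q]) Hw); rewrite /= ?cats0 //.
by case=> [|[]].
Qed.

Lemma relation_word_prefix_eq u e :
  relation_word R u -> relation_word R (u ++ e) -> e = [::].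
Proof.
case: e => [//|e0 e] Hu Hue; case: (relation_word_not_piece Hu).
apply: (pieceI (x1 := [::]) (y1 := [::]) (x2 := [::]) (y2 := e0 :: e) Hu Hue);
  rewrite ?cats0 //.
by left=> /(congr1 size); rewrite size_cat /=; lia.
Qed.

Lemma piece_shifted_prefix W V p u y e :
  relation_word R W -> relation_word R V -> W = p ++ u ++ y -> V = u ++ e ->
  p <> [::] -> piece R u.
Proof.
move=> HW HV EW EV p_neq0.
by apply: (pieceI (x2 := [::]) HW HV EW EV); right.
Qed.

Lemma piece_common_prefix U V c a b u v :
  relation_word R U -> relation_word R V -> U = c ++ a :: u -> V = c ++ b :: v ->
  a <> b -> piece R c.
Proof.
move=> HU HV EU EV neq_ab.
apply: (pieceI (x1 := [::]) (x2 := [::]) HU HV EU EV); left.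
by move=> EUV; apply/neq_ab/(@cat_cons_head_inj _ c u v); rewrite -EU -EV.
Qed.

End SmallCancellation.

Lemma related_unique (A : Type) (R : relset A) l r u :
  no_repeated_relation_words R -> related R l r -> related R r u -> u = l.
Proof.
move=> NR [H1|H1] [H2|H2].
- by case: (NR _ _ _ _ H2 H1).
- by case: (NR _ _ _ _ H1 H2) => _ _ ->.
- by case: (NR _ _ _ _ H1 H2) => _ ->.
- by case: (NR _ _ _ _ H1 H2).
Qed.

Section LeftCancellation.
Variables (A : Type) (R : relset A).
Hypotheses (C4 : C_cond R 4) (NR : no_repeated_relation_words R).
Hypothesis no_common_head : ~ exists (a : A) (r s : word A), R (a :: r, a :: s).

Definition cancels_letter n := forall (x : A) u v,
  derivation R n (x :: u) (x :: v) -> exists2 m, m <= n & derivation R m u v.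

Definition head_fixed n := forall (W p w t s : word A) b a,
  relation_word R W -> W = p ++ b :: w -> p <> [::] -> piece R p -> b <> a ->
  ~ derivation R n (b :: w ++ t) (a :: s).

Lemma cancel_prefix n : (forall m, m < n -> cancels_letter m) ->
  forall p k u v, k < n -> derivation R k (p ++ u) (p ++ v) ->
  exists2 m, m <= k & derivation R m u v.
Proof.
move=> IH; elim=> [|x p IHp] k u v lt_kn D; first by exists k.
have [m1 le_m1k D1] := IH k lt_kn x (p ++ u) (p ++ v) D.
have [m2 le_m2 D2] := IHp m1 u v (leq_ltn_trans le_m1k lt_kn) D1.
by exists m2; first exact: leq_trans le_m2 le_m1k.
Qed.

Section InductionStep.
Variable n : nat.
Hypothesis IHcancel : forall m, m < n -> cancels_letter m.
Hypothesis IHfixed : forall m, m < n -> head_fixed m.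

Lemma no_divergent_derivation k V c b w a u d :
  k < n -> relation_word R V -> V = c ++ b :: w -> c <> [::] -> piece R c ->
  a <> b -> ~ derivation R k (c ++ a :: u) (c ++ b :: w ++ d).
Proof.
move=> lt_kn HV EV c_neq0 Pc neq_ab D.
have [m le_mk Dm] := cancel_prefix IHcancel lt_kn D.
exact: (IHfixed (leq_ltn_trans le_mk lt_kn) HV EV c_neq0 Pc (nesym neq_ab))
       (derivation_sym Dm).
Qed.

Lemma head_fixed_step : head_fixed n.
Proof.
move=> W p w t s b a HW EW p_neq0 Pp neq_ba D.
have [k [w' [l [r [d [lt_kn Dk /related_relation_word [Hl _] Ew' _]]]]]] :=
  derivation_head_change neq_ba D.
case: l Ew' Hl (relation_word_neq_nil C4 Hl) => [//|_ l] /= [<- Ew'] Hl _.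
case: (prefix_cases w l) => [[e El]|[e Ew]|[c [a1 [b1 [u1 [v1 [neq_ab1 Ew El]]]]]]].
- apply: (relation_word_not_two_pieces C4 HW Pp _ EW).
  by apply: (piece_shifted_prefix (y := [::]) (e := e) HW Hl _ _ p_neq0);
    rewrite ?cats0 ?El.
- apply: (relation_word_not_piece C4 Hl).
  by apply: (piece_shifted_prefix (e := [::]) HW Hl _ _ p_neq0); rewrite ?cats0 // EW Ew.
- apply: (no_divergent_derivation (c := b :: c) (w := v1) (u := u1 ++ t) (d := d)
            lt_kn Hl _ _ _ neq_ab1).
  + by rewrite El.
  + by [].
  + by apply: (piece_shifted_prefix HW Hl _ _ p_neq0); rewrite ?El // EW Ew.
  + by move: (derivation_catl [:: b] Dk); rewrite Ew' El Ew -!catA.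
Qed.

Lemma cancels_letter_step : cancels_letter n.
Proof.
move=> x u v.
case: (posnP n) => [-> /derivation0_eq [->]|n_gt0].
  by exists 0 => //; exact: derivation0.
rewrite -(prednK n_gt0) => /derivationS_inv [w [[|c0 c] [l [r [d [Hlr /= Eu ->]]]]] D];
  last first.
  case: Eu D => <- -> D; have [m le_mn Dm] := IHcancel (ltac:(lia) : n.-1 < n) D.
  by exists m.+1; [lia | apply: derivationS Dm; exists c, l, r, d].
have [Hl Hr] := related_relation_word Hlr.
case: l Eu Hlr Hl (relation_word_neq_nil C4 Hl) => [//|_ l] /= [<- ->] Hlr Hl _.
case: r D Hlr Hr (relation_word_neq_nil C4 Hr) => [//|r0 r] D Hlr Hr _.
have neq_r0x : r0 <> x.
  move=> Er; subst r0; apply: no_common_head.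
  by case: Hlr => H; [exists x, l, r | exists x, r, l].
have [k [w' [l' [r' [d' [lt_kn Dk Hlr' Ew' Dk']]]]]] :=
  derivation_head_change (u := r ++ d) neq_r0x D.
have [Hl' _] := related_relation_word Hlr'.
case: l' Ew' Hlr' Hl' (relation_word_neq_nil C4 Hl') => [//|_ l'] /= [<- Ew'] Hlr' Hl' _.
have El' : l' = r.
  case: (prefix_cases r l') => [[e El']|[e Er]|[c [a1 [b1 [u1 [v1 [neq_ab1 Er El']]]]]]].
  - by move: Hl'; rewrite El' => /(relation_word_prefix_eq C4 Hr) ->; rewrite cats0.
  - by move: Hr; rewrite Er => /(relation_word_prefix_eq C4 Hl') ->; rewrite cats0.
  - exfalso; apply: (no_divergent_derivation (c := r0 :: c) (w := v1) (u := u1 ++ d)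
                       (d := d') (k := k) _ Hl' _ _ _ neq_ab1).
    + lia.
    + by rewrite El'.
    + by [].
    + by apply: (piece_common_prefix (U := r0 :: r) Hr Hl'); rewrite ?Er ?El'.
    + by move: (derivation_catl [:: r0] Dk); rewrite Ew' El' Er -!catA.
subst l' w'; have Er' : r' = x :: l := related_unique NR Hlr Hlr'; subst r'.
have [m1 le_m1k D1] := cancel_prefix IHcancel (ltac:(lia) : k < n) Dk.
have [m2 le_m2 D2] := IHcancel (ltac:(lia) : n.-1 - k.+1 < n) Dk'.
by exists (m1 + m2); [lia | exact: derivation_trans (derivation_catl l D1) D2].
Qed.

End InductionStep.

Lemma cancels_letter_head_fixed n : cancels_letter n /\ head_fixed n.
Proof.
elim/ltn_ind: n => n IH.
by split; [apply: cancels_letter_step | apply: head_fixed_step] => m /IH [].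
Qed.

Lemma left_cancellative_of_no_common_head : left_cancellative R.
Proof.
move=> p u v /pres_cong_derivation [n D].
have IH m : m < n.+1 -> cancels_letter m by move=> _; case: (cancels_letter_head_fixed m).
have [m _ Dm] := cancel_prefix IH (ltnSn n) D.
exact: derivation_pres_cong Dm.
Qed.

End LeftCancellation.

Lemma no_common_head_of_left_cancellative (A : Type) (R : relset A) :
  C_cond R 4 -> no_repeated_relation_words R -> left_cancellative R ->
  ~ exists (a : A) (r s : word A), R (a :: r, a :: s).
Proof.
move=> C4 NR LC [a [r [s H]]].
have Har : relation_word R (a :: r) by exists (a :: s); left.
have /LC /pres_cong_derivation [n D] : pres_cong R ([:: a] ++ r) ([:: a] ++ s).
  by have := pc_step [::] [::] H; rewrite /= !cats0.
suff Ers : r = s by subst s; case: (NR _ _ _ _ H H).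
apply: (derivation_factor_free _ D) => c l d Hl Er.
apply: (relation_word_not_piece C4 Hl).
by apply: (piece_shifted_prefix (p := a :: c) (e := [::]) Har Hl); rewrite ?cats0 ?Er.
Qed.

Theorem corollary7 (A : Type) (R : relset A) :
  strongly_C R 4 ->
  (left_cancellative R <->
   ~ (exists (a : A) (r s : word A), R (a :: r, a :: s))).
Proof.
move=> [C4 NR]; split; first exact: no_common_head_of_left_cancellative.
exact: left_cancellative_of_no_common_head.
Qed.
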